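(* In the crossed product setting described in the context, with $\ast$ an involution on $D$ satisfying $K^\ast\subseteq K$, the following are equivalent: (1) $D\otimes_F K$ is formally real, i.e. the involution $\#$ on $M_n(K)$ is formally real; (2) $\ast$ is formally real on $D$ and $(k^\ast)^\sigma=(k^\sigma)^\ast$ for every $k\in K$ and $\sigma\in G$; (3) $e_\sigma^\ast e_\sigma\in K$ for every $\sigma\in G$, and there exists a unital hermitian cone on $(K,\ast)$ containing all $e_\sigma^\ast e_\sigma$, $\sigma\in G$.
   Context: Let $K/F$ be a finite Galois extension of fields of characteristic $0$ with Galois group $G$, $n=|G|$; write $k^\sigma$ for the image of $k\in K$ under $\sigma$. Let $\Phi\colon G\times G\to K\setminus\{0\}$ be a normalized $2$-cocycle and $D=(K/F,\Phi)$ the crossed product: right $K$-vector space with basis $(e_\sigma)_{\sigma\in G}$, $e_{\mathrm{id}}=1$, multiplication $(\sum_\sigma e_\sigma c_\sigma)(\sum_\tau e_\tau d_\tau)=\sum_{\sigma,\tau}e_{\sigma\tau}\Phi(\sigma,\tau)c_\sigma^\tau d_\tau$ (so $ke_\sigma=e_\sigma k^\sigma$). Assume $D$ is a division algebra. Define $f\colon D\to K$ by $f(\sum_\sigma e_\sigma c_\sigma)=c_{\mathrm{id}}$. Let $\lambda\colon D\to M_n(K)$ (rows and columns indexed by $G$) be the left regular representation, $ae_\tau=\sum_\sigma e_\sigma\lambda(a)_{\sigma\tau}$; the map $a\otimes k\mapsto\lambda(a)k$ is an isomorphism $D\otimes_F K\cong M_n(K)$. For $X=[x_{\sigma\tau}]\in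 M_n(K)$ put $X^\ast=[x_{\tau\sigma}^\ast]$, let $A=[f(e_\sigma^\ast e_\tau)]_{\sigma,\tau\in G}$ (invertible with $A^\ast=A$), and let $X^\#=A^{-1}X^\ast A$, the involution on $M_n(K)$ with $\lambda(a^\ast)=\lambda(a)^\#$. An involution $\#$ on a ring $R$ is formally real if every finite sum of nonzero elements $rr^\#$ is nonzero. A unital hermitian cone on a ring $R$ with involution $\ast$ is a subset $M\subseteq\{r:r^\ast=r\}$ with $1\in M$, $M+M\subseteq M$, $aMa^\ast\subseteq M$ for all $a\in R$, and $M\cap-M=\{0\}$. *)

From HB Require Import structures.
From mathcomp Require Import all_boot all_order all_algebra all_fingroup all_field.
Set Implicit Arguments. Unset Strict Implicit. Unset Printing Implicit Defensive.
Import GRing.Theory.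
Local Open Scope ring_scope.

Definition formally_real (R : zmodType) (mul : R -> R -> R) (inv : R -> R) : Prop :=
  forall s : seq R, s != [::] -> all (fun r => r != 0) s ->
    \sum_(r <- s) mul r (inv r) != 0.

Definition unital_hermitian_cone (R : pzRingType) (inv : R -> R) (M : pred R) : Prop :=
  [/\ forall r, M r -> inv r = r,
      M 1,
      forall x y, M x -> M y -> M (x + y),
      forall a x, M x -> M (a * x * inv a)
    & forall x, (M x && M (- x)) = (x == 0)].

Notation GalT L := (gal_of (fullv : {vspace L})).

Section CrossedProduct.
Variables (F : fieldType) (L : splittingFieldType F).
(* The Galois group G of L/F; sigma k (written k^sigma in the paper) is
   the image of k; MathComp's product satisfies (s * t) k = t (s k),
   i.e. k^(st) = (k^s)^t, matching the paper's right-action convention. *)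
Local Notation GalT := (gal_of (fullv : {vspace L})).
Variable Phi : GalT -> GalT -> L.

(* Elements of D = (K/F, Phi): sum_s e_s c_s is represented by s |-> c_s. *)
Definition CP := {ffun GalT -> L}.

(* (sum e_s c_s)(sum e_t d_t) = sum e_(st) Phi(s,t) c_s^t d_t *)
Definition cp_mul (a b : CP) : CP :=
  [ffun r => \sum_(s : GalT) \sum_(t : GalT | (s * t)%g == r) Phi s t * t (a s) * b t].

Definition cp_e (s : GalT) : CP := [ffun r => if r == s then 1 else 0].
Definition cp_one : CP := cp_e 1%g.
Definition cp_emb (k : L) : CP := [ffun r => if r == 1%g then k else 0].
Definition cp_f (a : CP) : L := a 1%g.

Definition normalized_cocycle : Prop :=
  [/\ forall s t, Phi s t != 0,
      forall s, Phi 1%g s = 1,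
      forall s, Phi s 1%g = 1
    & forall s t r, Phi (s * t)%g r * r (Phi s t) = Phi s (t * r)%g * Phi t r].

Definition cp_division : Prop :=
  forall a : CP, a != 0 -> exists b : CP, cp_mul a b = cp_one /\ cp_mul b a = cp_one.

Definition cp_involution (star : CP -> CP) : Prop :=
  [/\ forall a b, star (a + b) = star a + star b,
      forall a b, star (cp_mul a b) = cp_mul (star b) (star a)
    & forall a, star (star a) = a].

(* restriction of star to K (meaningful when K^* is contained in K) *)
Definition kstar (star : CP -> CP) (k : L) : L := cp_f (star (cp_emb k)).

Definition in_K (a : CP) : Prop := forall r, r != 1%g -> a r = 0.

(* rows/columns of M_n(K) indexed by G via enum_val : 'I_#|G| -> G *)
Definition lambda (a : CP) : 'M[L]_#|{: GalT}| :=
  \matrix_(i, j) cp_mul a (cp_e (enum_val j)) (enum_val i).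

Definition mx_star (star : CP -> CP) (X : 'M[L]_#|{: GalT}|) : 'M[L]_#|{: GalT}| :=
  \matrix_(i, j) kstar star (X j i).

Definition Amx (star : CP -> CP) : 'M[L]_#|{: GalT}| :=
  \matrix_(i, j) cp_f (cp_mul (star (cp_e (enum_val i))) (cp_e (enum_val j))).

Definition mx_sharp (star : CP -> CP) (X : 'M[L]_#|{: GalT}|) : 'M[L]_#|{: GalT}| :=
  invmx (Amx star) *m mx_star star X *m Amx star.

End CrossedProduct.

From HB Require Import structures.
From mathcomp Require Import all_boot all_order all_algebra all_fingroup all_field.
From Stdlib Require ClassicalEpsilon.
Set Implicit Arguments. Unset Strict Implicit. Unset Printing Implicit Defensive.
Import GRing.Theory.
Local Open Scope ring_scope.

(* The proof rests on one structural observation: since k e_s = e_s k^s, the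
   element e_s^* is supported on a single basis vector e_mu, and mu = s^-1
   exactly when * commutes with s on K, exactly when e_s^* e_s lies in K.
   Consequently the Gram matrix A = [f(e_s^* e_t)] is monomial (one nonzero
   entry in each row and column), hence always invertible, and it is diagonal
   iff these equivalent conditions hold.  After the ring structure of D, the support analysis of e_s^*,
   and the left regular representation lambda (which intertwines * and #),
   the cycle of implications is:
   (1) -> (2): formal reality of # on E_ii forces A_ii != 0 (commutation), and
               it transfers to * along the injective map lambda;
   (2) -> (3): the sums of hermitian squares of D lying in K form the cone;
   (3) -> (1): with A diagonal, the diagonal of sum X X^# A^-1 is a sum of
               cone elements x A_jj^-1 x^*, so it vanishes only if every X does. *)

(* A boolean reading of a proposition, used to present a cone as a [pred]. *)
Definition holds (P : Prop) : bool :=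
  if ClassicalEpsilon.excluded_middle_informative P then true else false.

Lemma holdsP (P : Prop) : reflect P (holds P).
Proof. by rewrite /holds; case: ClassicalEpsilon.excluded_middle_informative; constructor. Qed.

Lemma formally_real_sum_eq0 (R : zmodType) (mul : R -> R -> R) (inv : R -> R) :
  formally_real mul inv -> mul 0 (inv 0) = 0 ->
  forall s : seq R, \sum_(r <- s) mul r (inv r) = 0 -> forall r, r \in s -> r = 0.
Proof.
move=> fr mul00 s sum0 r rs; apply/eqP/negPn/negP => r_nz.
set s' := filter (fun r => r != 0) s.
have r_s' : r \in s' by rewrite mem_filter r_nz rs.
have s'_nil : s' != [::] by case: (s') r_s'.
have := fr s' s'_nil (filter_all _ _); rewrite big_filter big_mkcond /=.
suff -> : \sum_(i <- s) (if i != 0 then mul i (inv i) else 0) = 0 by rewrite eqxx.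
by rewrite -[RHS]sum0; apply: eq_bigr => i _; case: eqP => [->|].
Qed.

Lemma formally_real_transfer (R S : zmodType) (mulR : R -> R -> R) (invR : R -> R)
    (mulS : S -> S -> S) (invS : S -> S) (phi : R -> S) :
  phi 0 = 0 -> {morph phi : x y / x + y} -> (forall a, phi a = 0 -> a = 0) ->
  (forall a, phi (mulR a (invR a)) = mulS (phi a) (invS (phi a))) ->
  formally_real mulS invS -> formally_real mulR invR.
Proof.
move=> phi0 phiD phi_inj0 phi_herm frS s s_nil s_nz.
have phi_sum : phi (\sum_(r <- s) mulR r (invR r)) =
               \sum_(x <- map phi s) mulS x (invS x).
  by rewrite big_map (big_morph phi phiD phi0); apply: eq_bigr => r _.
apply: contra_neq (frS (map phi s) _ _) => [sum0||]; first by rewrite -phi_sum sum0.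
- by case: (s) s_nil.
- rewrite all_map; apply: sub_all s_nz => r /= r_nz.
  by apply: contra_neq r_nz => /phi_inj0.
Qed.

Section HermitianCone.
Variables (R : pzRingType) (inv : R -> R) (M : pred R).
Hypothesis coneM : unital_hermitian_cone inv M.

Lemma cone0 : M 0.
Proof. by case: coneM => _ _ _ _ h; have := h 0; rewrite eqxx => /andP[]. Qed.

Lemma cone_sum I (l : seq I) (P : pred I) (f : I -> R) :
  (forall i, P i -> M (f i)) -> M (\sum_(i <- l | P i) f i).
Proof. by move=> Mf; apply: (big_ind M); [exact: cone0 | case: coneM | exact: Mf]. Qed.

(* Pointedness M cap -M = 0 makes a vanishing sum of cone elements vanish
   termwise. *)
Lemma cone_sum_eq0 (I : eqType) (l : seq I) (f : I -> R) :
  (forall i, i \in l -> M (f i)) -> \sum_(i <- l) f i = 0 ->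
  forall i, i \in l -> f i = 0.
Proof.
elim: l => [//|x l IH] Mf; rewrite big_cons => sum0.
have Ml : M (\sum_(i <- l) f i).
  by rewrite big_seq; apply: cone_sum => i il; apply: Mf; rewrite in_cons il orbT.
have fx0 : f x = 0.
  apply/eqP; case: coneM => _ _ _ _ <-.
  rewrite Mf ?in_cons ?eqxx //=.
  suff -> : - f x = \sum_(i <- l) f i by [].
  by apply/eqP; rewrite eq_sym -addr_eq0 addrC sum0.
move: sum0; rewrite fx0 add0r => sum0 i; rewrite in_cons => /orP[/eqP -> //|il].
by apply: IH => // j jl; apply: Mf; rewrite in_cons jl orbT.
Qed.
End HermitianCone.

(* A square matrix with exactly one nonzero entry in each row and at most one
   in each column is invertible, its inverse being the transpose of the
   entrywise inverse (using 0^-1 = 0). *)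
Section MonomialMatrix.
Variables (K : fieldType) (n : nat) (A : 'M[K]_n).
Hypothesis row_nz : forall i, exists j, A i j != 0.
Hypothesis row_uniq : forall i j j', A i j != 0 -> A i j' != 0 -> j = j'.
Hypothesis col_uniq : forall i i' j, A i j != 0 -> A i' j != 0 -> i = i'.

Definition mono_inv : 'M[K]_n := \matrix_(i, j) (A j i)^-1.

Lemma mulmx_mono_inv : A *m mono_inv = 1%:M.
Proof.
apply/matrixP => i k; rewrite !mxE; have [j0 nz0] := row_nz i.
rewrite (bigD1 j0) //= big1 => [|j nj]; last first.
  rewrite mxE; have [z|nz] := eqVneq (A i j) 0; first by rewrite z mul0r.
  by rewrite (row_uniq nz nz0) eqxx in nj.
rewrite addr0 mxE; have [<-|nik] := eqVneq i k; first by rewrite mulfV.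
have [z|nz] := eqVneq (A k j0) 0; first by rewrite z invr0 mulr0.
by rewrite (col_uniq nz0 nz) eqxx in nik.
Qed.

Lemma mono_unit : A \in unitmx.
Proof. by case: (mulmx1_unit mulmx_mono_inv). Qed.

Lemma invmx_mono : invmx A = mono_inv.
Proof. by rewrite -[RHS](mulKmx mono_unit) mulmx_mono_inv mulmx1. Qed.
End MonomialMatrix.

Lemma delta_conj (R : comPzRingType) n (i : 'I_n) (B : 'M[R]_n) :
  delta_mx i i *m B *m delta_mx i i = B i i *: delta_mx i i.
Proof.
apply/matrixP => k l; rewrite !mxE (bigD1 i) //= big1 => [|p /negbTE pi]; last first.
  by rewrite [delta_mx i i p l]mxE pi mulr0.
rewrite [delta_mx i i i l]mxE eqxx mxE (bigD1 i) //= big1 => [|p /negbTE pi]; last first.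
  by rewrite mxE [p == i]pi andbF mul0r.
rewrite mxE eqxx andbT !addr0.
by case: (k == i); case: (l == i); rewrite /= ?mul1r ?mulr1 ?mul0r ?mulr0.
Qed.

Section CrossedProduct.
Variables (F : fieldType) (L : splittingFieldType F).
Local Notation G := (gal_of (fullv : {vspace L})).
Local Notation n := #|{: G}|.
Variable Phi : G -> G -> L.
Hypothesis Phi_cocycle : normalized_cocycle Phi.

Local Notation mul := (cp_mul Phi).
Local Notation emb := (@cp_emb F L).
Local Notation one := (@cp_one F L).

Lemma gal_mulE (x y : G) a : (x * y)%g a = y (x a).
Proof. by rewrite galM // memvf. Qed.

Lemma gal_rmorphM (x : G) a b : x (a * b) = x a * x b.
Proof. by rewrite rmorphM. Qed.

Lemma gal_ext (x y : G) : (forall a, x a = y a) -> x = y.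
Proof. by move=> xy; apply/eqP/gal_eqP => a _; apply: xy. Qed.

Lemma galVK (s : G) y : s ((s^-1)%g y) = y.
Proof. by rewrite -gal_mulE mulVg gal_id. Qed.

Lemma Phi_neq0 (s t : G) : Phi s t != 0. Proof. by case: Phi_cocycle. Qed.
Lemma Phi1l (s : G) : Phi 1%g s = 1. Proof. by case: Phi_cocycle. Qed.
Lemma Phi1r (s : G) : Phi s 1%g = 1. Proof. by case: Phi_cocycle. Qed.
Lemma Phi_cocycleE (s t r : G) :
  Phi (s * t)%g r * r (Phi s t) = Phi s (t * r)%g * Phi t r.
Proof. by case: Phi_cocycle. Qed.

Lemma cp_eE (s r : G) : cp_e s r = if r == s then 1 else 0.
Proof. by rewrite ffunE. Qed.
Lemma cp_embE k (r : G) : emb k r = if r == 1%g then k else 0.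
Proof. by rewrite ffunE. Qed.
Lemma addE (a b : CP L) r : (a + b) r = a r + b r. Proof. by rewrite ffunE. Qed.
Lemma zeroE r : (0 : CP L) r = 0. Proof. by rewrite ffunE. Qed.
Lemma sumE I (l : seq I) (P : pred I) (f : I -> CP L) r :
  (\sum_(i <- l | P i) f i) r = \sum_(i <- l | P i) f i r.
Proof. exact: (big_morph (fun a : CP L => a r) (fun a b => addE a b r) (zeroE r)). Qed.

Lemma cp_mulEs a b r :
  mul a b r = \sum_s Phi s (s^-1 * r)%g * (s^-1 * r)%g (a s) * b (s^-1 * r)%g.
Proof.
rewrite ffunE; apply: eq_bigr => s _; rewrite (big_pred1 (s^-1 * r)%g) // => t /=.
by apply/eqP/eqP => [<-|->]; [rewrite mulKg | rewrite mulKVg].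
Qed.

Lemma cp_mulEt a b r :
  mul a b r = \sum_t Phi (r * t^-1)%g t * t (a (r * t^-1)%g) * b t.
Proof.
have r_inj : injective (fun t : G => r * t^-1)%g by move=> x y /mulgI /invg_inj.
rewrite cp_mulEs (reindex_inj r_inj) /=.
by apply: eq_bigr => t _; rewrite invMg invgK mulgKV.
Qed.

Lemma mul_e_r a t r : mul a (cp_e t) r = Phi (r * t^-1)%g t * t (a (r * t^-1)%g).
Proof.
rewrite cp_mulEt (bigD1 t) //= big1 => [|u ne]; first by rewrite cp_eE eqxx mulr1 addr0.
by rewrite cp_eE (negbTE ne) mulr0.
Qed.

Lemma mul_emb_r a c r : mul a (emb c) r = a r * c.
Proof.
rewrite cp_mulEt (bigD1 1%g) //= big1 => [|u ne].
  by rewrite cp_embE eqxx invg1 mulg1 Phi1r gal_id mul1r addr0.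
by rewrite cp_embE (negbTE ne) mulr0.
Qed.

Lemma mul_emb_l k b r : mul (emb k) b r = r k * b r.
Proof.
rewrite cp_mulEs (bigD1 1%g) //= big1 => [|u ne].
  by rewrite cp_embE eqxx invg1 mul1g Phi1l mul1r addr0.
by rewrite cp_embE (negbTE ne) rmorph0 mulr0 mul0r.
Qed.

Lemma cmulDl a b c : mul (a + b) c = mul a c + mul b c.
Proof.
apply/ffunP => r; rewrite addE !cp_mulEt -big_split /=; apply: eq_bigr => t _.
by rewrite addE rmorphD mulrDr mulrDl.
Qed.

Lemma cmulDr a b c : mul a (b + c) = mul a b + mul a c.
Proof.
apply/ffunP => r; rewrite addE !cp_mulEt -big_split /=; apply: eq_bigr => t _.
by rewrite addE mulrDr.
Qed.

Lemma cmul0l a : mul 0 a = 0.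
Proof.
by apply/ffunP => r; rewrite zeroE cp_mulEt big1 // => t _; rewrite zeroE rmorph0 mulr0 mul0r.
Qed.

Lemma cmul0r a : mul a 0 = 0.
Proof. by apply/ffunP => r; rewrite zeroE cp_mulEt big1 // => t _; rewrite zeroE mulr0. Qed.

(* Associativity of D is exactly the cocycle identity. *)
Lemma cmulA a b c : mul (mul a b) c = mul a (mul b c).
Proof.
apply/ffunP => r; rewrite cp_mulEt.
under eq_bigr => t _ do rewrite cp_mulEt rmorph_sum mulr_sumr mulr_suml.
rewrite [RHS]cp_mulEt.
under [RHS]eq_bigr => v _ do rewrite cp_mulEt !mulr_sumr.
rewrite [RHS]exchange_big /=; apply: eq_bigr => t _.
rewrite [RHS](reindex_inj (mulIg t)) /=; apply: eq_bigr => u _.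
rewrite mulgK invMg mulgA !gal_rmorphM -!gal_mulE.
set x := (r * t^-1 * u^-1)%g.
have -> : (r * t^-1)%g = (x * u)%g by rewrite /x mulgKV.
by rewrite !mulrA Phi_cocycleE -!mulrA; congr (_ * _); rewrite mulrCA.
Qed.

Lemma mul_sumr I (l : seq I) (P : pred I) (f : I -> CP L) a :
  mul a (\sum_(i <- l | P i) f i) = \sum_(i <- l | P i) mul a (f i).
Proof. exact: (big_morph (mul a) (fun x y => cmulDr a x y) (cmul0r a)). Qed.

Lemma mul_suml I (l : seq I) (P : pred I) (f : I -> CP L) a :
  mul (\sum_(i <- l | P i) f i) a = \sum_(i <- l | P i) mul (f i) a.
Proof. exact: (big_morph (mul^~ a) (fun x y => cmulDl x y a) (cmul0l a)). Qed.

Lemma cp_oneE : one = emb 1.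
Proof. by apply/ffunP => r; rewrite cp_eE. Qed.

Lemma cmul1 a : mul a one = a.
Proof. by apply/ffunP => r; rewrite cp_oneE mul_emb_r mulr1. Qed.

Lemma embM k1 k2 : mul (emb k1) (emb k2) = emb (k1 * k2).
Proof. by apply/ffunP => r; rewrite mul_emb_r !cp_embE; case: eqP => _; rewrite ?mul0r. Qed.
Lemma embD k1 k2 : emb (k1 + k2) = emb k1 + emb k2.
Proof. by apply/ffunP => r; rewrite addE !cp_embE; case: eqP => _; rewrite ?addr0. Qed.
Lemma emb0 : emb 0 = 0.
Proof. by apply/ffunP => r; rewrite zeroE !cp_embE; case: eqP. Qed.
Lemma embN k : emb (- k) = - emb k.
Proof. by apply/ffunP => r; rewrite [LHS]cp_embE ffunE cp_embE; case: eqP; rewrite ?oppr0. Qed.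
Lemma emb_inj : injective emb.
Proof. by move=> x y /ffunP /(_ 1%g); rewrite !cp_embE eqxx. Qed.

Lemma emb_e k (s : G) : mul (emb k) (cp_e s) = mul (cp_e s) (emb (s k)).
Proof.
apply/ffunP => r; rewrite mul_emb_l mul_emb_r cp_eE.
by case: eqP => [->|_]; rewrite ?mulr1 ?mul1r ?mulr0 ?mul0r.
Qed.

Lemma emb_inK z : in_K z -> emb (cp_f z) = z.
Proof. by move=> zK; apply/ffunP => r; rewrite cp_embE; case: eqP => [->|/eqP /zK]. Qed.

Lemma cp_decomp (a : CP L) :
  a = \sum_(k : 'I_n) mul (cp_e (enum_val k)) (emb (a (enum_val k))).
Proof.
apply/ffunP => r; rewrite sumE (bigD1 (enum_rank r)) //= big1 => [|k nk].
  by rewrite mul_emb_r enum_rankK cp_eE eqxx mul1r addr0.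
rewrite mul_emb_r cp_eE; case: eqP => [e|]; last by rewrite mul0r.
by move: nk; rewrite e enum_valK eqxx.
Qed.

Lemma f_emb_l k (z : CP L) : cp_f (mul (emb k) z) = k * cp_f z.
Proof. by rewrite /cp_f mul_emb_l gal_id. Qed.
Lemma f_sum I (l : seq I) (P : pred I) (f : I -> CP L) :
  cp_f (\sum_(i <- l | P i) f i) = \sum_(i <- l | P i) cp_f (f i).
Proof. exact: sumE. Qed.
Lemma f_emb_r k (z : CP L) : cp_f (mul z (emb k)) = cp_f z * k.
Proof. by rewrite /cp_f mul_emb_r. Qed.

Section Involution.
Variable star : CP L -> CP L.
Hypothesis star_inv : cp_involution Phi star.
Hypothesis starK : forall k : L, exists k' : L, star (emb k) = emb k'.
Local Notation kap := (kstar star).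

Lemma starD a b : star (a + b) = star a + star b. Proof. by case: star_inv. Qed.
Lemma starM a b : star (mul a b) = mul (star b) (star a). Proof. by case: star_inv. Qed.
Lemma starK2 a : star (star a) = a. Proof. by case: star_inv. Qed.

Lemma star0 : star 0 = 0.
Proof. by apply: (@addrI _ (star 0)); rewrite -starD !addr0. Qed.

Lemma star_sum I (l : seq I) (P : pred I) (f : I -> CP L) :
  star (\sum_(i <- l | P i) f i) = \sum_(i <- l | P i) star (f i).
Proof. exact: (big_morph star starD star0). Qed.

Lemma star_eq0 a : (star a == 0) = (a == 0).
Proof. by rewrite -{1}star0 (inj_eq (can_inj starK2)). Qed.

Lemma star1 : star one = one.
Proof. by rewrite -{1}(cmul1 (star one)) -{2}(starK2 one) -starM cmul1 starK2. Qed.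

Lemma star_emb k : star (emb k) = emb (kap k).
Proof. by have [k' e] := starK k; rewrite /kstar e /cp_f cp_embE eqxx. Qed.

Lemma kapM x y : kap (x * y) = kap x * kap y.
Proof. by apply: emb_inj; rewrite -star_emb -embM starM !star_emb embM mulrC. Qed.
Lemma kap1 : kap 1 = 1.
Proof. by apply: emb_inj; rewrite -star_emb -cp_oneE star1 cp_oneE. Qed.
Lemma kap0 : kap 0 = 0.
Proof. by apply: emb_inj; rewrite -star_emb emb0 star0. Qed.
Lemma kapK x : kap (kap x) = x.
Proof. by apply: emb_inj; rewrite -!star_emb starK2. Qed.
Lemma kap_eq0 x : (kap x == 0) = (x == 0).
Proof. by rewrite -{1}kap0 (inj_eq (can_inj kapK)). Qed.
Lemma kapV x : kap (x^-1) = (kap x)^-1.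
Proof.
have [->|nz] := eqVneq x 0; first by rewrite invr0 kap0 invr0.
apply: (mulfI (x := kap x)); first by rewrite kap_eq0.
by rewrite -kapM !mulfV ?kap1 ?kap_eq0.
Qed.

(* Applying star to k e_s = e_s k^s: if e_s^* has a nonzero e_mu-coefficient,
   then k^* is the image of (k^s)^* under mu, for every k. *)
Lemma star_e_twist (s mu : G) k : star (cp_e s) mu != 0 -> kap k = mu (kap (s k)).
Proof.
move=> nz; apply: (mulIf nz); rewrite mulrC.
have := congr1 star (emb_e k s); rewrite !starM !star_emb => /ffunP /(_ mu).
by rewrite mul_emb_r mul_emb_l => ->.
Qed.

Lemma star_e_support_uniq (s mu mu' : G) :
  star (cp_e s) mu != 0 -> star (cp_e s) mu' != 0 -> mu = mu'.
Proof.
move=> nz nz'; apply: gal_ext => y.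
have -> : y = kap (s ((s^-1)%g (kap y))) by rewrite galVK kapK.
by rewrite -(star_e_twist _ nz) -(star_e_twist _ nz').
Qed.

Lemma star_e_support_ex (s : G) : exists mu, star (cp_e s) mu != 0.
Proof.
have [mu nz|all0] := pickP (fun mu => star (cp_e s) mu != 0); first by exists mu.
have : star (cp_e s) = 0 by apply/ffunP => mu; rewrite zeroE; apply/eqP/negbFE/all0.
move/eqP; rewrite star_eq0 => /eqP /ffunP /(_ s) /eqP.
by rewrite cp_eE eqxx zeroE oner_eq0.
Qed.

Lemma star_e_support_inj (s s' mu : G) :
  star (cp_e s) mu != 0 -> star (cp_e s') mu != 0 -> s = s'.
Proof.
move=> nz nz'; apply: gal_ext => y.
by have := star_e_twist y nz; rewrite (star_e_twist y nz') => /fmorph_inj /(can_inj kapK).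
Qed.

Lemma commute_iff (s : G) :
  star (cp_e s) (s^-1)%g != 0 <-> (forall k, s (kap k) = kap (s k)).
Proof.
split=> [nz k|comm]; first by rewrite (star_e_twist k nz) galVK.
have [mu nz] := star_e_support_ex s.
suff -> : (s^-1)%g = mu by [].
apply: gal_ext => y; rewrite -{2}(galVK s y).
by rewrite -{1}(kapK ((s^-1)%g y)) (star_e_twist _ nz) -comm kapK.
Qed.

Lemma inK_iff (s : G) :
  in_K (mul (star (cp_e s)) (cp_e s)) <-> star (cp_e s) (s^-1)%g != 0.
Proof.
split=> [inK|nz r r1].
  have [mu nz] := star_e_support_ex s.
  have [e1|ne] := eqVneq (mu * s)%g 1%g.
    by rewrite -[mu](mulgK s) e1 mul1g in nz.
  have := inK _ ne; rewrite mul_e_r mulgK => /eqP.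
  by rewrite mulf_eq0 (negbTE (Phi_neq0 _ _)) fmorph_eq0 (negbTE nz).
rewrite mul_e_r; apply/eqP; rewrite mulf_eq0 fmorph_eq0; apply/orP; right.
apply: contraNT r1 => nz'; have e := star_e_support_uniq nz' nz.
by rewrite -[r](mulgKV s) e mulVg.
Qed.

Local Notation A := (Amx Phi star).
Local Notation sharp := (mx_sharp Phi star).

(* For s = enum_val i and t = enum_val j, A_ij = Phi(t^-1, t) c^t where c is
   the e_(t^-1)-coefficient of e_s^*; so A_ij != 0 iff t^-1 = mu(s). *)
Lemma Amx_nz i j :
  (A i j != 0) = (star (cp_e (enum_val i)) ((enum_val j)^-1)%g != 0).
Proof. by rewrite mxE /cp_f mul_e_r mul1g mulf_eq0 negb_or Phi_neq0 fmorph_eq0. Qed.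

Lemma Amx_row_nz i : exists j, A i j != 0.
Proof.
have [mu nz] := star_e_support_ex (enum_val i).
by exists (enum_rank (mu^-1)%g); rewrite Amx_nz enum_rankK invgK.
Qed.

Lemma Amx_row_uniq i j j' : A i j != 0 -> A i j' != 0 -> j = j'.
Proof.
rewrite !Amx_nz => nz nz'.
by apply/enum_val_inj/invg_inj; apply: star_e_support_uniq nz nz'.
Qed.

Lemma Amx_col_uniq i i' j : A i j != 0 -> A i' j != 0 -> i = i'.
Proof. by rewrite !Amx_nz => nz nz'; apply/enum_val_inj; apply: star_e_support_inj nz nz'. Qed.

Lemma Amx_unit : A \in unitmx.
Proof. exact: mono_unit Amx_row_nz Amx_row_uniq Amx_col_uniq. Qed.

Lemma invAmxE i j : invmx A i j = (A j i)^-1.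
Proof. by rewrite (invmx_mono Amx_row_nz Amx_row_uniq Amx_col_uniq) mxE. Qed.

Section DiagonalGram.
Hypothesis commute : forall s : G, star (cp_e s) (s^-1)%g != 0.

Lemma Amx_diag_nz i : A i i != 0.
Proof. by rewrite Amx_nz commute. Qed.

Lemma Amx_offdiag i j : i != j -> A i j = 0.
Proof.
by apply: contraNeq => nz; apply/eqP/(Amx_row_uniq (Amx_diag_nz i) nz).
Qed.

Lemma invAmx_diag : invmx A = diag_mx (\row_j (A j j)^-1).
Proof.
apply/matrixP => i j; have [<-|ij] := eqVneq i j.
  by rewrite invAmxE !mxE eqxx mulr1n.
by rewrite invAmxE Amx_offdiag 1?eq_sym // invr0 mxE (negbTE ij) mulr0n.
Qed.
End DiagonalGram.

Local Notation lam := (lambda Phi).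

Lemma lamE a i j : lam a i j = mul a (cp_e (enum_val j)) (enum_val i).
Proof. by rewrite mxE. Qed.

Lemma lamM a b : lam (mul a b) = lam a *m lam b.
Proof.
apply/matrixP => i j; rewrite lamE mxE cmulA.
rewrite [mul b _]cp_decomp mul_sumr sumE; apply: eq_bigr => k _.
by rewrite -cmulA mul_emb_r !lamE.
Qed.

Lemma lamD : {morph lam : a b / a + b}.
Proof. by move=> a b; apply/matrixP => i j; rewrite !mxE cmulDl addE. Qed.

Lemma lam0 : lam 0 = 0.
Proof. by apply/matrixP => i j; rewrite lamE cmul0l zeroE mxE. Qed.

Lemma lam_eq0 a : lam a = 0 -> a = 0.
Proof.
move=> /matrixP a0; apply/ffunP => r; rewrite zeroE.
by have := a0 (enum_rank r) (enum_rank 1%g); rewrite lamE !enum_rankK -/one cmul1 mxE.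
Qed.

Lemma lam_star_rel a : mx_star star (lam a) *m A = A *m lam (star a).
Proof.
apply/matrixP => i j; rewrite !mxE.
pose z := mul a (cp_e (enum_val i)).
transitivity (cp_f (mul (star z) (cp_e (enum_val j)))).
  rewrite [z]cp_decomp star_sum mul_suml f_sum; apply: eq_bigr => k _.
  by rewrite starM star_emb cmulA f_emb_l [mx_star _ _ i k]mxE lamE [A k j]mxE.
rewrite /z starM cmulA [mul (star a) _]cp_decomp mul_sumr f_sum.
by apply: eq_bigr => k _; rewrite -cmulA f_emb_r lamE mxE.
Qed.

Lemma lam_star a : lam (star a) = sharp (lam a).
Proof. by rewrite /mx_sharp -mulmxA lam_star_rel mulKmx // Amx_unit. Qed.

(* (1) -> commutation: formal reality of # on the idempotent E_ii, whose
   hermitian square is (A^-1)_ii E_ii A, forces A_ii != 0. *)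
Lemma sharp_real_commute :
  formally_real (fun X Y : 'M[L]_n => X *m Y) sharp ->
  forall s : G, star (cp_e s) (s^-1)%g != 0.
Proof.
move=> fr s; set i := enum_rank s; set X := delta_mx i i : 'M[L]_n.
have X_nz : X != 0.
  by apply/eqP => /matrixP /(_ i i); rewrite !mxE !eqxx => /eqP; rewrite oner_eq0.
have X_herm : mx_star star X = X.
  by apply/matrixP => k l; rewrite !mxE andbC; case: (_ && _); rewrite ?kap1 ?kap0.
have := fr [:: X] isT; rewrite /= X_nz big_seq1 /mx_sharp X_herm !mulmxA.
rewrite delta_conj invAmxE -scalemxAl => /(_ isT).
rewrite scaler_eq0 negb_or invr_eq0 => /andP[+ _].
by rewrite Amx_nz enum_rankK.
Qed.

Lemma sharp_real_star_real :
  formally_real (fun X Y : 'M[L]_n => X *m Y) sharp -> formally_real mul star.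
Proof.
apply: (formally_real_transfer lam0 lamD lam_eq0) => a.
by rewrite lamM lam_star.
Qed.

Definition herm_sos (a : CP L) : Prop :=
  exists l : seq (CP L), a = \sum_(r <- l) mul r (star r).

Lemma herm_sos_herm a : herm_sos a -> star a = a.
Proof.
by case=> l ->; rewrite star_sum; apply: eq_bigr => r _; rewrite starM starK2.
Qed.

Lemma herm_sos1 : herm_sos one.
Proof. by exists [:: one]; rewrite big_seq1 star1 cmul1. Qed.

Lemma herm_sosD a b : herm_sos a -> herm_sos b -> herm_sos (a + b).
Proof. by case=> [l1 ->] [l2 ->]; exists (l1 ++ l2); rewrite big_cat. Qed.

Lemma herm_sos_conj b a : herm_sos a -> herm_sos (mul b (mul a (star b))).
Proof.
case=> l ->; exists (map (mul b) l).
rewrite mul_suml mul_sumr big_map; apply: eq_bigr => r _.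
by rewrite starM !cmulA.
Qed.

Lemma herm_sos_pointed a :
  formally_real mul star -> herm_sos a -> herm_sos (- a) -> a = 0.
Proof.
move=> fr [l1 e1] [l2 e2].
have sum0 : \sum_(r <- l1 ++ l2) mul r (star r) = 0 by rewrite big_cat /= -e1 -e2 subrr.
have zero r : r \in l1 ++ l2 -> r = 0.
  by apply: (formally_real_sum_eq0 fr _ sum0); rewrite star0 cmul0l.
by rewrite e1 big_seq big1 // => r rl; rewrite (zero r) ?cmul0l // mem_cat rl.
Qed.

(* (2) -> (3): the hermitian sums of squares lying in K form the cone. *)
Lemma star_real_cone :
  formally_real mul star -> (forall k (s : G), s (kap k) = kap (s k)) ->
  (forall s : G, in_K (mul (star (cp_e s)) (cp_e s))) /\
  exists M : pred L, unital_hermitian_cone kap M /\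
    forall s : G, M (cp_f (mul (star (cp_e s)) (cp_e s))).
Proof.
move=> fr comm.
have inK s : in_K (mul (star (cp_e s)) (cp_e s)).
  by apply/inK_iff/commute_iff => k; apply: comm.
split=> //; exists (fun x => holds (herm_sos (emb x))); split; last first.
  move=> s; apply/holdsP; rewrite emb_inK //.
  by exists [:: star (cp_e s)]; rewrite big_seq1 starK2.
split.
- by move=> x /holdsP /herm_sos_herm; rewrite star_emb => /emb_inj.
- by apply/holdsP; rewrite -cp_oneE; apply: herm_sos1.
- by move=> x y /holdsP sx /holdsP sy; apply/holdsP; rewrite embD; apply: herm_sosD.
- move=> a x /holdsP sx; apply/holdsP.
  by rewrite -!embM -star_emb cmulA; apply: herm_sos_conj.
move=> x; apply/andP/eqP => [[/holdsP sx /holdsP sNx]|->]; last first.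
  by rewrite oppr0 emb0; split; apply/holdsP; exists [::]; rewrite big_nil.
apply: emb_inj; rewrite emb0; apply: herm_sos_pointed => //.
by rewrite -embN.
Qed.

Lemma sharp_diag_mul (commute : forall s : G, star (cp_e s) (s^-1)%g != 0) X :
  X *m sharp X = X *m diag_mx (\row_j (A j j)^-1) *m mx_star star X *m A.
Proof. by rewrite /mx_sharp invAmx_diag // !mulmxA. Qed.

Lemma diag_quad_entry (X : 'M[L]_n) (d : 'rV[L]_n) i :
  (X *m diag_mx d *m mx_star star X) i i = \sum_j X i j * d 0 j * kap (X i j).
Proof. by rewrite mxE; apply: eq_bigr => j _; rewrite mul_mx_diag !mxE. Qed.

Lemma cone_sharp_real (commute : forall s : G, star (cp_e s) (s^-1)%g != 0)
    (M : pred L) (coneM : unital_hermitian_cone kap M) (MA : forall i, M (A i i)) :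
  formally_real (fun X Y : 'M[L]_n => X *m Y) sharp.
Proof.
move=> sl sl_nil sl_nz; apply/negP => /eqP sum0.
set d := \row_j (A j j)^-1.
have quad0 : \sum_(X <- sl) X *m diag_mx d *m mx_star star X = 0.
  move: sum0; under eq_bigr do rewrite sharp_diag_mul //.
  rewrite -mulmx_suml => /(congr1 (mulmx^~ (invmx A))).
  by rewrite mulmxK ?Amx_unit // mul0mx.
have [M_herm _ _ M_conj _] := coneM.
have Md j : M (d 0 j).
  have -> : d 0 j = (A j j)^-1 * A j j * kap (A j j)^-1.
    by rewrite mxE kapV (M_herm _ (MA j)) mulVf ?mul1r ?Amx_diag_nz.
  exact: M_conj.
have M_term (X : 'M[L]_n) (i j : 'I_n) : M (X i j * d 0 j * kap (X i j)) by apply: M_conj.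
have X_zero (X : 'M[L]_n) (i j : 'I_n) : X \in sl -> X i j = 0.
  move=> Xsl; have := congr1 (fun N : 'M[L]_n => N i i) quad0.
  rewrite /= summxE mxE; under eq_bigr do rewrite diag_quad_entry.
  have M_row (Y : 'M[L]_n) : M (\sum_j (Y i j * d 0 j * kap (Y i j))).
    by apply: (cone_sum coneM) => j' _; apply: M_term.
  move/(cone_sum_eq0 coneM (fun (Y : 'M[L]_n) _ => M_row Y))/(_ X Xsl).
  move/(cone_sum_eq0 coneM (fun j' _ => M_term X i j'))/(_ j (mem_index_enum j)).
  move/eqP; rewrite !mulf_eq0 kap_eq0 mxE invr_eq0 (negbTE (Amx_diag_nz commute j)).
  by rewrite orbF orbb => /eqP.
case: sl sl_nil sl_nz X_zero {sum0 quad0} => [//|X0 sl] _ /= /andP[X0_nz _] X_zero.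
by move/negP: X0_nz; apply; apply/eqP/matrixP => i j; rewrite mxE X_zero ?mem_head.
Qed.

End Involution.
End CrossedProduct.

Theorem theorem3p3 (F : fieldType) (L : splittingFieldType F)
  (Phi : GalT L -> GalT L -> L) (star : CP L -> CP L)
  (charF : [pchar F] =i pred0)
  (galLF : galois 1%AS (fullv : {vspace L}))
  (Phi_cocycle : normalized_cocycle Phi)
  (Ddiv : cp_division Phi)
  (star_inv : cp_involution Phi star)
  (starK : forall k : L, exists k' : L, star (cp_emb k) = cp_emb k') :
  [<->
    formally_real (fun X Y : 'M[L]_#|{: GalT L}| => X *m Y) (mx_sharp Phi star);
    formally_real (cp_mul Phi) star /\
      (forall (k : L) (s : GalT L), s (kstar star k) = kstar star (s k));
    (forall s : GalT L, in_K (cp_mul Phi (star (cp_e s)) (cp_e s))) /\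
      exists M : pred L, unital_hermitian_cone (kstar star) M /\
        forall s : GalT L, M (cp_f (cp_mul Phi (star (cp_e s)) (cp_e s)))].
Proof.
tfae.
- move=> sharp_real; split.
    exact: (sharp_real_star_real Phi_cocycle star_inv starK sharp_real).
  move=> k s; apply: (commute_iff Phi_cocycle star_inv starK s).1.
  exact: (sharp_real_commute Phi_cocycle star_inv starK sharp_real).
- by case=> star_real comm; apply: (star_real_cone Phi_cocycle star_inv starK star_real).
case=> inK [M [coneM M_norms]].
have commute s : star (cp_e s) (s^-1)%g != 0.
  exact: (inK_iff Phi_cocycle star_inv starK s).1 (inK s).
apply: (cone_sharp_real Phi_cocycle star_inv starK commute coneM) => i.
by rewrite mxE; apply: M_norms.
Qed.
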